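(* Let $N,M$ be positive integers, let $\mathscr{A}\subset\mathscr{M}(N,M)$ and $\mathscr{B}\subset\mathscr{M}(M,N)$ be finite sets of real matrices, and let $\|\cdot\|$ be a submultiplicative norm on $\mathscr{M}(N,N)$. Suppose that for every sequence $\{A_n\}_{n\ge1}$ with $A_n\in\mathscr{A}$ there exists a sequence $\{B_n\}_{n\ge1}$ with $B_n\in\mathscr{B}$ such that $\|A_nB_n\cdots A_1B_1\|\to0$ as $n\to\infty$. Then there exist a positive integer $k_*$ and a constant $\mu\in(0,1)$ such that for every sequence $\{A_n\in\mathscr{A}\}$ there exist a positive integer $k\le k_*$ and matrices $B_1,\ldots,B_k\in\mathscr{B}$ with $\|A_kB_k\cdots A_1B_1\|\le\mu$.
   Context: $\mathscr{M}(p,q)$ denotes the space of $p\times q$ real matrices with the topology of elementwise convergence. A norm on $\mathscr{M}(N,N)$ is submultiplicative if $\|XY\|\le\|X\|\,\|Y\|$ for all $X,Y$. *)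

From HB Require Import structures.
From mathcomp Require Import all_boot all_order all_algebra.
From mathcomp Require Import all_classical all_reals all_analysis.
Set Implicit Arguments. Unset Strict Implicit. Unset Printing Implicit Defensive.
Import Order.TTheory GRing.Theory Num.Theory.
Local Open Scope ring_scope.

Definition submult_norm (R : realType) (N : nat) (nrm : 'M[R]_N -> R) : Prop :=
  [/\ (forall X, nrm X = 0 -> X = 0),
      (forall (c : R) X, nrm (c *: X) = `|c| * nrm X),
      (forall X Y, nrm (X + Y) <= nrm X + nrm Y) &
      (forall X Y, nrm (X *m Y) <= nrm X * nrm Y)].

(* prodAB a b n = A_n B_n A_{n-1} B_{n-1} ... A_1 B_1 (sequences indexed from 1;
   the value at index 0 is unused); prodAB a b 0 = identity. *)
Fixpoint prodAB (R : realType) (N M : nat)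
  (a : nat -> 'M[R]_(N, M)) (b : nat -> 'M[R]_(M, N)) (n : nat) : 'M[R]_N :=
  match n with
  | 0 => 1%:M
  | n'.+1 => (a n'.+1 *m b n'.+1) *m prodAB a b n'
  end.

(** The condition "some finite product A_k B_k ... A_1 B_1 has norm at most mu"
    depends only on the first k letters of the sequence (A_n), and every
    sequence over the finite alphabet As satisfies it for some k, because the
    products tend to 0.  By compactness of As^N (the fan theorem, i.e. König's
    lemma) such a k can be bounded uniformly. *)
From HB Require Import structures.
From mathcomp Require Import all_boot all_order all_algebra.
From mathcomp Require Import all_classical all_reals all_analysis.
From mathcomp Require Import lra.
Import Order.TTheory GRing.Theory Num.Theory.
Import numFieldNormedType.Exports.
Local Open Scope classical_set_scope.
Local Open Scope ring_scope.

Definition agree_upto {T : Type} (n : nat) (a a' : nat -> T) : Prop :=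
  forall i, (0 < i <= n)%N -> a i = a' i.

Lemma agree_upto_trans {T : Type} n (a a' a'' : nat -> T) :
  agree_upto n a a' -> agree_upto n a' a'' -> agree_upto n a a''.
Proof. by move=> aa' a'a'' i hi; rewrite aa' // a'a''. Qed.

Lemma agree_uptoW {T : Type} m n (a a' : nat -> T) :
  (m <= n)%N -> agree_upto n a a' -> agree_upto m a a'.
Proof. by move=> mn aa' i /andP[i0 im]; rewrite aa' // i0 (leq_trans im mn). Qed.

Section FanTheorem.
Variables (T : eqType) (s : seq T) (Q : nat -> (nat -> T) -> Prop).

Let valid (a : nat -> T) := forall n, (0 < n)%N -> a n \in s.
Let avoids (m : nat) (a : nat -> T) := forall k, (k <= m)%N -> ~ Q k a.
Let extendable (n : nat) (w : nat -> T) :=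
  forall m, exists a, [/\ valid a, agree_upto n w a & avoids m a].

Lemma extendable_valid n w : (0 < n)%N -> extendable n w -> w n \in s.
Proof.
move=> n0 /(_ 0%N) [a [va wa _]].
by rewrite wa ?n0 ?leqnn //; exact: va.
Qed.

(* Finiteness of [s]: if no letter x could follow the prefix w, each x would
   be ruled out from some level m x on, and the level \max_(x <- s) m x would
   rule out every letter. *)
Lemma extendable_step n w :
  extendable n w -> exists w', agree_upto n w w' /\ extendable n.+1 w'.
Proof.
move=> ext.
have [x ext_x] : exists x, forall m, exists a,
    [/\ valid a, agree_upto n w a, a n.+1 = x & avoids m a].
  apply: contrapT => /forallNP no_x.
  have /choice[m hm] : forall x, exists m, x \in s -> forall a,
      valid a -> agree_upto n w a -> a n.+1 = x -> ~ avoids m a.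
    move=> x; have /existsNP[m hm] := no_x x; exists m => _ a va wa ax am.
    by apply: hm; exists a.
  have [a [va wa aK]] := ext (\max_(x <- s) m x)%N.
  have ax := va _ (ltn0Sn n).
  apply: (hm _ ax a va wa erefl) => k km; apply: aK.
  by apply: leq_trans km _; apply: (leq_bigmax_seq (P := predT)) ax _.
have [w' [_ ww' w'x _]] := ext_x 0%N.
exists w'; split => // m.
have [a [va wa ax am]] := ext_x m; exists a; split => // i /andP[i0].
rewrite leq_eqVlt => /orP[/eqP->|iSn]; first by rewrite w'x ax.
by rewrite -ww' ?i0 // wa // i0.
Qed.

Lemma extendable_path w0 :
  extendable 0 w0 -> exists a, forall n, extendable n a.
Proof.
move=> ext0.
have /choice[next hnext] : forall n, exists next_n : (nat -> T) -> nat -> T,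
    forall w, extendable n w -> agree_upto n w (next_n w) /\
                                extendable n.+1 (next_n w).
  move=> n; have /choice[g hg] : forall w, exists w',
      extendable n w -> agree_upto n w w' /\ extendable n.+1 w'.
    move=> w; case: (pselect (extendable n w)) => [/extendable_step[w' hw']|nw].
      by exists w'.
    by exists w.
  by exists g.
pose branch n := iteri n next w0.
have ext_branch n : extendable n (branch n).
  by elim: n => [//|n IH]; rewrite /branch iteriS; exact: (hnext n _ IH).2.
have branch_stable n m : (n <= m)%N -> agree_upto n (branch n) (branch m).
  elim: m => [|m IH]; first by rewrite leqn0 => /eqP->.
  rewrite leq_eqVlt ltnS => /orP[/eqP->//|nm].
  apply: agree_upto_trans (IH nm) _; apply: agree_uptoW nm _.
  by rewrite /branch iteriS; exact: (hnext m _ (ext_branch m)).1.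
exists (fun i => branch i i) => n m.
have [a [va wa am]] := ext_branch n m.
exists a; split => // i /andP[i0 iLn].
by rewrite (branch_stable i n) ?wa ?i0 ?leqnn.
Qed.

Hypothesis Q_prefix : forall k a a', agree_upto k a a' -> Q k a -> Q k a'.

Theorem fan_theorem :
  (forall a, valid a -> exists k, Q k a) ->
  exists K, forall a, valid a -> exists2 k, (k <= K)%N & Q k a.
Proof.
move=> bar; apply: contrapT => /forallNP no_bound.
have bad K : exists a, valid a /\ avoids K a.
  have /existsNP[a /not_implyP[va noQ]] := no_bound K.
  by exists a; split => // k kK Qk; apply: noQ; exists k.
have [w0 _] := bad 0%N.
have [a ext_a] : exists a, forall n, extendable n a.
  apply: (extendable_path w0) => m; have [a [va am]] := bad m.
  by exists a; split => // i /andP[i0 /(leq_trans i0)].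
have [k Qk] : exists k, Q k a.
  by apply: bar => n n0; exact: extendable_valid (ext_a n).
have [a' [_ aa' a'k]] := ext_a k k.
exact: a'k k (leqnn k) (Q_prefix _ _ _ aa' Qk).
Qed.

End FanTheorem.

Lemma eq_prodAB {R : realType} {N M k : nat} {a a' : nat -> 'M[R]_(N, M)}
    (b : nat -> 'M[R]_(M, N)) :
  agree_upto k a a' -> prodAB a b k = prodAB a' b k.
Proof.
elim: k => [//|k IH] aa' /=.
by rewrite aa' ?leqnn // IH //; apply: agree_uptoW aa'.
Qed.

Theorem lemma1 (R : realType) (N M : nat) (hN : (0 < N)%N) (hM : (0 < M)%N)
  (As : seq 'M[R]_(N, M)) (Bs : seq 'M[R]_(M, N)) (nrm : 'M[R]_N -> R)
  (hnrm : submult_norm nrm)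
  (hyp : forall a : nat -> 'M[R]_(N, M), (forall n, (0 < n)%N -> a n \in As) ->
     exists b : nat -> 'M[R]_(M, N), (forall n, (0 < n)%N -> b n \in Bs) /\
       (fun n => nrm (prodAB a b n)) @ \oo --> (0 : R)) :
  exists kstar : nat, (0 < kstar)%N /\
  exists mu : R, 0 < mu < 1 /\
  forall a : nat -> 'M[R]_(N, M), (forall n, (0 < n)%N -> a n \in As) ->
    exists k : nat, (0 < k <= kstar)%N /\
    exists b : nat -> 'M[R]_(M, N), (forall i, (0 < i <= k)%N -> b i \in Bs) /\
      nrm (prodAB a b k) <= mu.
Proof.
pose mu : R := 1 / 2.
pose Q k a := (0 < k)%N /\ exists b : nat -> 'M[R]_(M, N),
  (forall i, (0 < i <= k)%N -> b i \in Bs) /\ nrm (prodAB a b k) <= mu.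
have Q_prefix k a a' : agree_upto k a a' -> Q k a -> Q k a'.
  by move=> aa' [k0 [b [vb hb]]]; split=> //; exists b; rewrite -(eq_prodAB b aa').
have bar a : (forall n, (0 < n)%N -> a n \in As) -> exists k, Q k a.
  move=> va; have [b [vb /cvgr_le/(_ mu)]] := hyp a va.
  case=> [|K _ HK]; first by rewrite /mu; lra.
  exists K.+1; split=> //; exists b; split; last exact: HK (leqnSn K).
  by move=> i /andP[i0 _]; exact: vb.
have [K HK] := @fan_theorem _ As Q Q_prefix bar.
exists K.+1; split=> //; exists mu; split; first by rewrite /mu; lra.
move=> a va; have [k kK [k0 hb]] := HK a va.
by exists k; split; [rewrite k0; exact: leqW kK | exact: hb].
Qed.
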